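(* Let $\mathcal{X},\mathcal{Y}$ be finite-dimensional real Hilbert spaces, $\mathcal{A}:\mathcal{X}\to\mathcal{Y}$ linear, $\mathcal{R}:\mathcal{X}\to\mathbb{R}$ $\rho$-weakly convex, and $F:\mathcal{Y}\to\mathbb{R}\cup\{+\infty\}$ proper, convex and lower semicontinuous with convex conjugate $F^*$ being $\mu$-strongly convex. Let $(z^k)=(x^k,y^k)$ be generated by the PDHGM iteration with $\vartheta=1$ and step sizes $\tau,\sigma>0$ satisfying $\tau\sigma\|\mathcal{A}\|^2<1$, $\tau\rho<1$ and $\mu\sigma>3$. Then for every $k\ge1$, \[ \mathcal{L}(z^{k},z^{k-1})-\mathcal{L}(z^{k+1},z^{k})\geqslant \frac{1}{2}(\mu\sigma-3)\|y^{k}-y^{k+1}\|_{M}^2 +\frac{1}{2}(1-\rho\tau)\|x^{k}-x^{k+1}\|_{M}^2 . \]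
   Context: $f$ is $\rho$-weakly convex ($\rho\ge0$) if $f+\frac{\rho}{2}\|\cdot\|^2$ is convex, and $\mu$-strongly convex ($\mu>0$) if $f-\frac{\mu}{2}\|\cdot\|^2$ is convex. $F^*(y)=\sup_{w\in\mathcal{Y}}\{\langle y,w\rangle-F(w)\}$. $\mathcal{A}^*$ is the adjoint and $\|\mathcal{A}\|$ the operator norm. The saddle function is $L(x,y)=\mathcal{R}(x)+\langle\mathcal{A}x,y\rangle_{\mathcal{Y}}-F^*(y)$. PDHGM with $\vartheta=1$: from $z^0=(x^0,y^0)$, $x^{k+1}=\operatorname{argmin}_x\{\mathcal{R}(x)+\langle y^k,\mathcal{A}x\rangle+\frac{1}{2\tau}\|x-x^k\|^2\}$, $x_\vartheta^{k+1}=x^{k+1}+(x^{k+1}-x^k)$, $y^{k+1}=\operatorname{argmin}_y\{F^*(y)-\langle y,\mathcal{A}x_\vartheta^{k+1}\rangle+\frac{1}{2\sigma}\|y-y^k\|^2\}$. For $z=(x,y)$, $\|z\|_M^2=\frac1\tau\|x\|^2-2\langle\mathcal{A}x,y\rangle+\frac1\sigma\|y\|^2$ (i.e. $\langle z,Mz\rangle$ with $M=\begin{pmatrix}\frac1\tau I&-\mathcal{A}^*\\-\mathcal{A}&\frac1\sigma I\end{pmatrix}$); for $x\in\mathcal{X}$, $\|x\|_M=\|x\|/\sqrt\tau$, and for $y\in\mathcal{Y}$, $\|y\|_M=\|y\|/\sqrt\sigma$. The Lyapunov function is $\mathcal{L}(z,z')=L(z)+\frac12\|z'-z\|_M^2$.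 *)

From HB Require Import structures.
From mathcomp Require Import all_boot all_order all_algebra.
From mathcomp Require Import all_classical all_reals all_analysis.
Set Implicit Arguments. Unset Strict Implicit. Unset Printing Implicit Defensive.
Import Order.TTheory GRing.Theory Num.Theory.
Import numFieldNormedType.Exports.
Local Open Scope classical_set_scope.
Local Open Scope ring_scope.

(* Finite-dimensional real Hilbert spaces are modelled as column vectors
   'cV[R]_n with the standard (Euclidean) inner product. *)
Section Defs.
Variable R : realType.

Definition dotv (n : nat) (u v : 'cV[R]_n) : R := \sum_(i < n) u i 0 * v i 0.

Definition normv (n : nat) (u : 'cV[R]_n) : R := Num.sqrt (dotv u u).

Definition opnorm (m n : nat) (A : 'M[R]_(m, n)) : R :=
  sup [set normv (A *m x) | x in [set x : 'cV[R]_n | normv x <= 1]].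

Definition convex_fun (n : nat) (f : 'cV[R]_n -> R) : Prop :=
  forall (x y : 'cV[R]_n) (t : R), 0 <= t <= 1 ->
    f (t *: x + (1 - t) *: y) <= t * f x + (1 - t) * f y.

Definition convex_efun (n : nat) (f : 'cV[R]_n -> \bar R) : Prop :=
  forall (x y : 'cV[R]_n) (t : R), 0 <= t <= 1 ->
    (f (t *: x + (1 - t) *: y)%R <= t%:E * f x + (1 - t)%R%:E * f y)%E.

Definition weakly_convex (n : nat) (rho : R) (f : 'cV[R]_n -> R) : Prop :=
  convex_fun (fun x => f x + rho / 2 * normv x ^+ 2).

Definition strongly_convex_e (n : nat) (mu : R) (f : 'cV[R]_n -> \bar R) : Prop :=
  convex_efun (fun x => (f x - (mu / 2 * normv x ^+ 2)%R%:E)%E).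

Definition proper_efun (n : nat) (f : 'cV[R]_n -> \bar R) : Prop :=
  (forall x, f x != -oo%E) /\ exists x, f x != +oo%E.

Definition conjugate (n : nat) (F : 'cV[R]_n -> \bar R) (y : 'cV[R]_n) : \bar R :=
  ereal_sup [set ((dotv y w)%:E - F w)%E | w in [set: 'cV[R]_n]].

Definition saddleL (m n : nat) (Rf : 'cV[R]_n -> R) (A : 'M[R]_(m, n))
  (Fs : 'cV[R]_m -> \bar R) (z : 'cV[R]_n * 'cV[R]_m) : \bar R :=
  ((Rf z.1 + dotv (A *m z.1) z.2)%:E - Fs z.2)%E.

Definition normM2 (m n : nat) (A : 'M[R]_(m, n)) (tau sigma : R)
  (z : 'cV[R]_n * 'cV[R]_m) : R :=
  tau^-1 * normv z.1 ^+ 2 - 2 * dotv (A *m z.1) z.2 + sigma^-1 * normv z.2 ^+ 2.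

Definition lyap (m n : nat) (Rf : 'cV[R]_n -> R) (A : 'M[R]_(m, n))
  (Fs : 'cV[R]_m -> \bar R) (tau sigma : R)
  (z z' : 'cV[R]_n * 'cV[R]_m) : \bar R :=
  (saddleL Rf A Fs z + (normM2 A tau sigma (z'.1 - z.1, z'.2 - z.2) / 2)%:E)%E.

(* PDHGM iteration with theta = 1: the iterates are minimizers of the subproblems *)
Definition pdhgm (m n : nat) (Rf : 'cV[R]_n -> R) (A : 'M[R]_(m, n))
  (Fs : 'cV[R]_m -> \bar R) (tau sigma : R)
  (x : nat -> 'cV[R]_n) (y : nat -> 'cV[R]_m) : Prop :=
  forall k : nat,
    (forall x' : 'cV[R]_n,
       Rf (x k.+1) + dotv (y k) (A *m x k.+1) + (2 * tau)^-1 * normv (x k.+1 - x k) ^+ 2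
       <= Rf x' + dotv (y k) (A *m x') + (2 * tau)^-1 * normv (x' - x k) ^+ 2)
    /\
    (let xt := x k.+1 + (x k.+1 - x k) in
     forall y' : 'cV[R]_m,
       (Fs (y k.+1) - (dotv (y k.+1) (A *m xt))%R%:E
          + ((2 * sigma)^-1 * normv (y k.+1 - y k) ^+ 2)%R%:E
       <= Fs y' - (dotv y' (A *m xt))%R%:E
          + ((2 * sigma)^-1 * normv (y' - y k) ^+ 2)%R%:E)%E).

End Defs.

From HB Require Import structures.
From mathcomp Require Import all_boot all_order all_algebra.
From mathcomp Require Import all_classical all_reals all_analysis.
From mathcomp Require Import ring lra.
Import Order.TTheory GRing.Theory Num.Theory.
Import numFieldNormedType.Exports.
Local Open Scope classical_set_scope.
Local Open Scope ring_scope.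

(* Both updates are proximal steps: x^(k+1) minimizes the (-rho)-strongly convex
   R plus a linear term plus |. - x^k|^2/(2 tau), and y^(k) minimizes the
   mu-strongly convex F^* plus a linear term plus |. - y^(k-1)|^2/(2 sigma).  The
   three-point inequality of such a step, with moduli 1/tau - rho and
   mu + 1/sigma, bounds the decrease of the saddle function from below up to the
   cross term <A (x^(k-1) - x^k), (y^(k-1) - y^k) - (y^k - y^(k+1))>, which the M-norm
   absorbs because tau sigma |A|^2 <= 1 makes M positive semidefinite.
   The y-inequality needs F^* to be finite at the iterates.  F^* is proper since
   F has an affine minorant: the gradient inequality at a proximal point of F,
   the limit of a minimizing sequence that is Cauchy by strong convexity of the
   proximal objective. *)

Section Euclidean.
Context {R : realType} {k : nat}.
Implicit Types (u v w : 'cV[R]_k) (a : R).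

Lemma dotvC u v : dotv u v = dotv v u.
Proof. by apply: eq_bigr => i _; rewrite mulrC. Qed.

Lemma dotvDl u v w : dotv (u + v) w = dotv u w + dotv v w.
Proof. by rewrite /dotv -big_split; apply: eq_bigr => i _; rewrite mxE mulrDl. Qed.

Lemma dotvZl a u w : dotv (a *: u) w = a * dotv u w.
Proof. by rewrite /dotv mulr_sumr; apply: eq_bigr => i _; rewrite mxE mulrA. Qed.

Lemma dotvNl u w : dotv (- u) w = - dotv u w.
Proof. by rewrite -scaleN1r dotvZl mulN1r. Qed.

Lemma dotvBl u v w : dotv (u - v) w = dotv u w - dotv v w.
Proof. by rewrite dotvDl dotvNl. Qed.

Lemma dotvDr u v w : dotv w (u + v) = dotv w u + dotv w v.
Proof. by rewrite dotvC dotvDl !(dotvC w). Qed.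

Lemma dotvZr a u w : dotv w (a *: u) = a * dotv w u.
Proof. by rewrite dotvC dotvZl dotvC. Qed.

Lemma dotvNr u w : dotv w (- u) = - dotv w u.
Proof. by rewrite dotvC dotvNl dotvC. Qed.

Lemma dotvBr u v w : dotv w (u - v) = dotv w u - dotv w v.
Proof. by rewrite dotvDr dotvNr. Qed.

Lemma dotv0l u : dotv 0 u = 0.
Proof. by rewrite /dotv big1 // => i _; rewrite mxE mul0r. Qed.

Lemma dotvv_ge0 u : 0 <= dotv u u.
Proof. by apply: sumr_ge0 => i _; rewrite -expr2 sqr_ge0. Qed.

Lemma sqr_normv u : normv u ^+ 2 = dotv u u.
Proof. by rewrite sqr_sqrtr // dotvv_ge0. Qed.

Lemma normv_ge0 u : 0 <= normv u.
Proof. exact: sqrtr_ge0. Qed.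

Lemma normv0 : normv (0 : 'cV[R]_k) = 0.
Proof. by rewrite /normv dotv0l sqrtr0. Qed.

Lemma normvZ a u : normv (a *: u) = `|a| * normv u.
Proof. by rewrite /normv dotvZl dotvZr mulrA -expr2 sqrtrM ?sqr_ge0 // sqrtr_sqr. Qed.

Lemma normr_coord_le u i : `|u i 0| <= normv u.
Proof.
rewrite -sqrtr_sqr ler_wsqrtr // /dotv (bigD1 i) //= -expr2 lerDl.
by apply: sumr_ge0 => j _; rewrite -expr2 sqr_ge0.
Qed.

Lemma sqr_normv_convex_comb t u v :
  normv (t *: u + (1 - t) *: v) ^+ 2 =
  t * normv u ^+ 2 + (1 - t) * normv v ^+ 2 - t * (1 - t) * normv (u - v) ^+ 2.
Proof.
rewrite !sqr_normv !(dotvBl, dotvBr, dotvDl, dotvZl, dotvDr, dotvZr) (dotvC v u).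
ring.
Qed.

Lemma sqr_normv_convex_combB t u v w :
  normv (t *: u + (1 - t) *: v - w) ^+ 2 =
  t * normv (u - w) ^+ 2 + (1 - t) * normv (v - w) ^+ 2 - t * (1 - t) * normv (u - v) ^+ 2.
Proof.
have -> : t *: u + (1 - t) *: v - w = t *: (u - w) + (1 - t) *: (v - w).
  by rewrite !scalerBr addrACA -opprD -scalerDl subrKC scale1r.
by rewrite sqr_normv_convex_comb opprB subrKA.
Qed.

End Euclidean.

Section OperatorNorm.
Context {R : realType} {m n : nat} (A : 'M[R]_(m, n)).

Let image_unit_ball := [set normv (A *m x) | x in [set x : 'cV[R]_n | normv x <= 1]].

Lemma opnorm_has_sup : has_sup image_unit_ball.
Proof.
split; first by exists (normv (A *m 0)), 0; rewrite //= normv0 ler01.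
exists (Num.sqrt (\sum_(i < m) (\sum_(j < n) `|A i j|) ^+ 2)) => _ [z /= z1 <-].
rewrite ler_wsqrtr //; apply: ler_sum => i _; rewrite -expr2.
rewrite -[leLHS]real_normK ?num_real // ler_pXn2r ?nnegrE //; last first.
  by apply: sumr_ge0 => j _.
rewrite mxE; apply: le_trans (ler_norm_sum _ _ _) _.
apply: ler_sum => j _; rewrite normrM ler_piMr //.
exact: le_trans (normr_coord_le z j) z1.
Qed.

Lemma opnorm_ge0 : 0 <= opnorm A.
Proof.
apply: le_trans (normv_ge0 (A *m 0)) _.
apply: sup_upper_bound; first exact: opnorm_has_sup.
by exists 0; rewrite //= normv0 ler01.
Qed.

Lemma normv_mulmx_le w : normv (A *m w) <= opnorm A * normv w.
Proof.
apply/ler_addgt0Pr => e e0.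
have hA := opnorm_ge0.
(* Rescale w into the unit ball; the slack keeps the scaling defined at w = 0. *)
set s := normv w + e / (opnorm A + 1).
have s0 : 0 < s by rewrite /s ltr_wpDl ?normv_ge0 // divr_gt0 // ltr_wpDl.
have : normv (A *m (s^-1 *: w)) <= opnorm A.
  apply: sup_upper_bound; first exact: opnorm_has_sup.
  exists (s^-1 *: w) => //=.
  rewrite normvZ gtr0_norm ?invr_gt0 // mulrC ler_pdivrMr // mul1r.
  by rewrite /s lerDl divr_ge0 // ltW // ltr_wpDl.
move=> hs; rewrite -scalemxAr normvZ gtr0_norm ?invr_gt0 // mulrC in hs.
rewrite ler_pdivrMr // in hs.
apply: le_trans hs _; rewrite /s mulrDr lerD2l mulrA ler_pdivrMr ?ltr_wpDl //.
nra.
Qed.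

Lemma sqr_normv_mulmx_le w : normv (A *m w) ^+ 2 <= opnorm A ^+ 2 * normv w ^+ 2.
Proof.
by rewrite -exprMn ler_pXn2r ?nnegrE ?mulr_ge0 ?normv_ge0 ?opnorm_ge0 ?normv_mulmx_le.
Qed.

End OperatorNorm.

Lemma normM2_ge0 {R : realType} {m n : nat} (A : 'M[R]_(m, n)) {tau sigma : R}
    (z : 'cV[R]_n * 'cV[R]_m) :
  0 < tau -> 0 < sigma -> tau * sigma * opnorm A ^+ 2 <= 1 ->
  0 <= normM2 A tau sigma z.
Proof.
move: z => [a d] /= t0 s0 hts.
(* Young: 2 <A a, d> <= sigma |A a|^2 + |d|^2 / sigma. *)
have young : 0 <= normv (sigma *: (A *m a) - d) ^+ 2 by rewrite sqr_ge0.
have hAa : sigma * normv (A *m a) ^+ 2 <= tau^-1 * normv a ^+ 2.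
  rewrite -(ler_pM2l t0) [leRHS]mulrA mulfV ?gt_eqF // mul1r.
  have := sqr_normv_mulmx_le A a; have := sqr_ge0 (normv a); have := mulr_gt0 t0 s0.
  nra.
rewrite /normM2 /=; rewrite !sqr_normv in young hAa *.
rewrite !(dotvBl, dotvBr, dotvZl, dotvZr) (dotvC d) in young.
rewrite -(ler_pM2l s0) mulr0.
have -> : sigma * (tau^-1 * dotv a a - 2 * dotv (A *m a) d + sigma^-1 * dotv d d)
  = sigma * (tau^-1 * dotv a a) - 2 * sigma * dotv (A *m a) d + dotv d d.
  by field; rewrite !gt_eqF.
nra.
Qed.

Lemma le_of_onemM_le {R : realFieldType} (c d : R) :
  0 <= c -> (forall t, 0 < t < 1 -> (1 - t) * c <= d) -> c <= d.
Proof.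
move=> c0 H; apply/ler_addgt0Pr => e e0.
have ec0 : 0 < e + e + c by rewrite ltr_wpDr // addr_gt0.
have /H : 0 < e / (e + e + c) < 1.
  by rewrite divr_gt0 //= ltr_pdivrMr // mul1r -addrA ltr_pwDr // ltr_wpDr.
suff : e / (e + e + c) * c <= e by lra.
by rewrite mulrAC ler_pdivrMr // ler_pM2l //; lra.
Qed.

Lemma EFin_of_le {R : realType} {x : \bar R} {c : R} :
  x != -oo%E -> (x <= c%:E)%E -> exists r, x = r%:E.
Proof. by case: x => [r _ _|_|//]; [exists r | rewrite leye_eq]. Qed.

Section Prox.
Context {R : realType} {k : nat}.
Implicit Types (g : 'cV[R]_k -> \bar R) (L : 'cV[R]_k -> R) (s : R) (a p v w : 'cV[R]_k).

Definition affine_fun L :=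
  forall u v t, L (t *: u + (1 - t) *: v) = t * L u + (1 - t) * L v.

Lemma affine_fun_dotv_mulmx {m : nat} (b : 'cV[R]_m) (A : 'M[R]_(m, k)) :
  affine_fun (fun v => dotv b (A *m v)).
Proof. by move=> u v t; rewrite mulmxDr -!scalemxAr dotvDr !dotvZr. Qed.

Lemma affine_fun_opp_dotv (c : 'cV[R]_k) : affine_fun (fun v => - dotv v c).
Proof. by move=> u v t; rewrite dotvDl !dotvZl; ring. Qed.

Definition prox_min g L s a p := forall v,
  (g p + (L p + (2 * s)^-1 * normv (p - a) ^+ 2)%:E
    <= g v + (L v + (2 * s)^-1 * normv (v - a) ^+ 2)%:E)%E.

Lemma weakly_convex_strongly_convex_e {rho : R} {f : 'cV[R]_k -> R} :
  weakly_convex rho f -> strongly_convex_e (- rho) (fun x => (f x)%:E).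
Proof.
move=> fconv u v t t01; rewrite -!EFinB -!EFinM -EFinD lee_fin.
by rewrite !mulNr !opprK; exact: fconv.
Qed.

Lemma convex_efun_strongly_convex_e0 {g} : convex_efun g -> strongly_convex_e 0 g.
Proof.
rewrite /strongly_convex_e.
by have -> : (fun x => g x - (0 / 2 * normv x ^+ 2)%:E)%E = g
  by apply/funext => x; rewrite !mul0r sube0.
Qed.

Lemma proper_efun_fin {g} : proper_efun g -> exists v0 c, g v0 = c%:E.
Proof.
move=> [gN [v0 gv0]]; exists v0, (fine (g v0)).
by rewrite fineK // fin_numE gN gv0.
Qed.

Lemma prox_min_fin {g L s a p} :
  proper_efun g -> prox_min g L s a p -> exists gp, g p = gp%:E.
Proof.
move=> gprop pmin; have [gN _] := gprop; have [v0 [c gv0]] := proper_efun_fin gprop.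
have := pmin v0; rewrite gv0 -EFinD -leeBrDr // -EFinB.
exact: EFin_of_le (gN p).
Qed.

(* Convexity along the segment [p, w], compared with the minimality of p,
   gives the growth term after letting the segment parameter tend to 0. *)
Lemma prox_three_point {g L} {al s : R} {a p w} {gp gw : R} :
  strongly_convex_e al g -> (forall v, g v != -oo%E) -> affine_fun L ->
  0 < s -> 0 <= al + s^-1 -> prox_min g L s a p ->
  g p = gp%:E -> g w = gw%:E ->
  gp + L p + (2 * s)^-1 * normv (p - a) ^+ 2 + (al + s^-1) / 2 * normv (w - p) ^+ 2
    <= gw + L w + (2 * s)^-1 * normv (w - a) ^+ 2.
Proof.
move=> gconv gN Laff s0 be0 pmin gpE gwE.
rewrite addrC -lerBrDr; apply: le_of_onemM_le.
  by rewrite mulr_ge0 ?sqr_ge0 ?divr_ge0.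
move=> t /andP[t0 t1]; set v := t *: w + (1 - t) *: p.
have := gconv w p t; rewrite ltW ?(ltW t1) //= gwE gpE => /(_ isT).
have := pmin v; rewrite gpE.
case: (g v) (gN v) => [gv _|_ _|//]; last by rewrite addye // -!EFinD -!EFinM -EFinD leye_eq.
rewrite -!EFinD !lee_fin => hmin hconv.
rewrite sqr_normv_convex_combB Laff in hmin.
rewrite sqr_normv_convex_comb in hconv.
rewrite -(ler_pM2l t0); lra.
Qed.

Lemma prox_descent {g L} {al s : R} {a p} {gp ga : R} :
  strongly_convex_e al g -> (forall v, g v != -oo%E) -> affine_fun L ->
  0 < s -> 0 <= al + s^-1 -> prox_min g L s a p ->
  g p = gp%:E -> g a = ga%:E ->
  gp + L p + (2 * s)^-1 * normv (p - a) ^+ 2 + (al + s^-1) / 2 * normv (a - p) ^+ 2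
    <= ga + L a.
Proof.
move=> gconv gN Laff s0 mod0 pmin gpE gaE.
have := prox_three_point gconv gN Laff s0 mod0 pmin gpE gaE.
by rewrite subrr normv0 expr0n mulr0 addr0.
Qed.

End Prox.

Lemma lower_semicontinuous_cvg_le {R : realType} {T : topologicalType}
    {f : T -> \bar R} {u : nat -> T} {p : T} {a : R} :
  lower_semicontinuous f -> u @ \oo --> p ->
  (forall e, 0 < e -> \forall n \near \oo, (f (u n) <= (a + e)%:E)%E) ->
  (f p <= a%:E)%E.
Proof.
move=> flsc up fu; apply/lee_addgt0Pr => e e0; rewrite -EFinD leNgt.
apply/negP => /flsc [V pV Vf].
have [n [/Vf fn un]] : exists n, V (u n) /\ (f (u n) <= (a + e)%:E)%E.
  by apply: (@filter_ex _ \oo); apply: filterI; [exact: up | exact: fu].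
by move: fn; rewrite ltNge un.
Qed.

Section Completeness.
Context {R : realType} {k : nat}.

Lemma ball_of_normv (u v : 'cV[R]_k) (e : R) : normv (v - u) < e -> ball u e v.
Proof.
move=> uv; split=> [|i j]; first exact: le_lt_trans (normv_ge0 _) uv.
rewrite (ord1 j) /ball /= distrC; apply: le_lt_trans uv.
by have := normr_coord_le (v - u) i; rewrite !mxE.
Qed.

Lemma sqr_normv_continuous : continuous (fun v : 'cV[R]_k => normv v ^+ 2).
Proof.
have -> : (fun v : 'cV[R]_k => normv v ^+ 2) = fun v => \sum_(i < k) v i 0 * v i 0.
  by apply/funext => v; rewrite sqr_normv.
move=> v; apply: (cvg_big add_continuous (nbhs_filter v)) => i _.
by apply: cvgM; exact: coord_continuous.
Qed.

Lemma cvg_of_sqr_normv_le (w : nat -> 'cV[R]_k) (e : nat -> R) :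
  e @ \oo --> 0 -> (forall i j, normv (w i - w j) ^+ 2 <= e i + e j) ->
  cvg (w @ \oo).
Proof.
move=> e0 we; apply/cauchy_cvgP/cauchy_exP => eps eps0.
have eps2 : 0 < eps ^+ 2 / 2 by rewrite divr_gt0 ?exprn_gt0.
have [N _ eN] := cvgr_lt 0 e0 _ eps2.
exists (w N), N => // i /= Ni; apply: ball_of_normv.
suff : normv (w i - w N) ^+ 2 < eps ^+ 2.
  by rewrite ltr_pXn2r // nnegrE ?normv_ge0 // ltW.
have := we i N; have := eN i Ni; have := eN N (leqnn N); lra.
Qed.

End Completeness.

Section ProxExistence.
Context {R : realType} {k : nat} {F : 'cV[R]_k -> \bar R}.
Implicit Types (u v w : 'cV[R]_k).
Hypotheses (Fconv : convex_efun F) (Flsc : lower_semicontinuous F)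
  (FN : forall v, F v != -oo%E).

(* Lower semicontinuity bounds F from below on a ball around x0, and convexity
   carries the bound along every ray from x0 with a linear loss. *)
Lemma convex_lsc_cone_minorant {x0 : 'cV[R]_k} {f0 : R} : F x0 = f0%:E ->
  exists c, forall w, ((f0 - 1 - c * normv (w - x0))%:E <= F w)%E.
Proof.
move=> Fx0.
have : ((f0 - 1)%:E < F x0)%E by rewrite Fx0 lte_fin gtrBl ltr01.
move=> /Flsc [V /nbhs_ballP [e /= e0 eV] VF].
have near_x0 w : normv (w - x0) < e -> ((f0 - 1)%:E < F w)%E.
  by move=> wx0; apply/VF/eV/ball_of_normv.
exists (2 / e) => w; set r := normv (w - x0).
have r0 : 0 <= r := normv_ge0 _.
have [re|er] := ltP r e.
  apply: le_trans (ltW (near_x0 w re)); rewrite lee_fin gerBl //.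
  by rewrite mulr_ge0 // divr_ge0 // ltW.
have := FN w; case Fw: (F w) => [fw||] // _; last by rewrite leey.
have r_gt0 : 0 < r := lt_le_trans e0 er.
pose t := e / (2 * r).
have t0 : 0 < t by rewrite divr_gt0 // mulr_gt0.
have t1 : t <= 1 by rewrite ler_pdivrMr ?mulr_gt0 //; lra.
have tr : t * r = e / 2 by rewrite /t; field; rewrite gt_eqF.
have xt_near : normv (t *: w + (1 - t) *: x0 - x0) < e.
  rewrite (_ : _ - x0 = t *: (w - x0)); last first.
    by rewrite scalerBr scalerBl scale1r addrCA (addrC x0) addrK.
  by rewrite normvZ gtr0_norm // tr; lra.
have t01 : 0 <= t <= 1 by rewrite ltW.
have := lt_le_trans (near_x0 _ xt_near) (Fconv w x0 t t01).
rewrite Fw Fx0 -!EFinM -EFinD lte_fin => hconv.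
have : t * (2 / e * r) = 1 by rewrite mulrCA tr; field; rewrite gt_eqF.
rewrite lee_fin -(ler_pM2l t0); nra.
Qed.

Lemma convex_lsc_prox_lower_bound {x0 : 'cV[R]_k} {f0 : R} : F x0 = f0%:E ->
  exists lb, forall w fw, F w = fw%:E -> lb <= fw + 2^-1 * normv (w - x0) ^+ 2.
Proof.
move=> /convex_lsc_cone_minorant [c Fc].
exists (f0 - 1 - c ^+ 2 / 2) => w fw Fw.
have := Fc w; rewrite Fw lee_fin; have := sqr_ge0 (normv (w - x0) - c).
nra.
Qed.

(* The proximal objective is 1-strongly convex: compare its value at the midpoint
   of u and v with the infimum g. *)
Lemma prox_gap_sqr_normv_le {x0 : 'cV[R]_k} {g : R} {u v} {fu fv : R} :
  (forall w fw, F w = fw%:E -> g <= fw + 2^-1 * normv (w - x0) ^+ 2) ->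
  F u = fu%:E -> F v = fv%:E ->
  normv (u - v) ^+ 2 <= 4 * (fu + 2^-1 * normv (u - x0) ^+ 2 - g)
                         + 4 * (fv + 2^-1 * normv (v - x0) ^+ 2 - g).
Proof.
move=> gmin Fu Fv; set mid := 2^-1 *: u + (1 - 2^-1) *: v.
have half01 : 0 <= (2^-1 : R) <= 1 by apply/andP; split; lra.
have := Fconv u v 2^-1 half01; rewrite -/mid Fu Fv -!EFinM -EFinD => hconv.
have [fm Fm] := EFin_of_le (FN mid) hconv.
move: hconv; rewrite Fm lee_fin => hconv; have := gmin mid fm Fm.
rewrite sqr_normv_convex_combB; lra.
Qed.

Lemma prox_objective_inf {x0 : 'cV[R]_k} {f0 : R} : F x0 = f0%:E ->
  exists g : R,
    (forall w fw, F w = fw%:E -> g <= fw + 2^-1 * normv (w - x0) ^+ 2) /\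
    (forall e, 0 < e ->
       exists w fw, F w = fw%:E /\ fw + 2^-1 * normv (w - x0) ^+ 2 < g + e).
Proof.
move=> Fx0; have [lb Flb] := convex_lsc_prox_lower_bound Fx0.
pose S := [set r | exists w fw, F w = fw%:E /\ r = fw + 2^-1 * normv (w - x0) ^+ 2].
have Sinf : has_inf S.
  split; first by exists (f0 + 2^-1 * normv (x0 - x0) ^+ 2), x0, f0.
  by exists lb => _ [w [fw [Fw ->]]]; exact: Flb.
exists (inf S); split=> [w fw Fw|e e0].
  by apply: ge_inf Sinf.2 _ _; exists w, fw.
by have [_ [w [fw [Fw ->]]] lt] := inf_adherent e0 Sinf; exists w, fw.
Qed.

(* A minimizing sequence is Cauchy by prox_gap_sqr_normv_le, and lower
   semicontinuity passes the infimum to its limit. *)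
Lemma prox_objective_argmin {x0 : 'cV[R]_k} {g : R} :
  (forall w fw, F w = fw%:E -> g <= fw + 2^-1 * normv (w - x0) ^+ 2) ->
  (forall e, 0 < e ->
     exists w fw, F w = fw%:E /\ fw + 2^-1 * normv (w - x0) ^+ 2 < g + e) ->
  exists p fp, F p = fp%:E /\ fp + 2^-1 * normv (p - x0) ^+ 2 <= g.
Proof.
move=> gmin gadh; pose q w := 2^-1 * normv (w - x0) ^+ 2.
have /choice [wf wfP] n : exists wf : 'cV[R]_k * R,
    F wf.1 = wf.2%:E /\ wf.2 + q wf.1 < g + harmonic n.
  by have [w [fw]] := gadh _ (harmonic_gt0 n); exists (w, fw).
pose w n := (wf n).1; pose gap n := (wf n).2 + q (w n) - g.
have Fw n : F (w n) = ((wf n).2)%:E := (wfP n).1.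
have gap_cvg : (fun n => 4 * gap n) @ \oo --> 0.
  rewrite -(mulr0 4); apply: cvgM; first exact: cvg_cst.
  apply: (squeeze_cvgr _ (cvg_cst 0) cvg_harmonic).
  near=> n; have := gmin _ _ (Fw n); have := (wfP n).2; rewrite /gap.
  by move=> lt ge; rewrite subr_ge0 ge /= ltW // ltrBlDl.
have wcvg : cvg (w @ \oo).
  exact: cvg_of_sqr_normv_le gap_cvg (fun i j => prox_gap_sqr_normv_le gmin (Fw i) (Fw j)).
set p := lim (w @ \oo).
have qcvg : q (w n) @[n --> \oo] --> q p.
  apply: cvgM; first exact: cvg_cst.
  apply: (continuous_cvg _ (sqr_normv_continuous _)).
  by apply: cvgB; [exact: wcvg | exact: cvg_cst].
have Fp_le : (F p <= (g - q p)%:E)%E.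
  apply: (lower_semicontinuous_cvg_le Flsc wcvg) => e e0.
  have e2 : 0 < e / 2 by rewrite divr_gt0.
  near=> n; rewrite Fw lee_fin.
  have : `|q p - q (w n)| < e / 2 by near: n; exact: cvgr_dist_lt.
  have : `|0 - 4 * gap n| < e / 2 by near: n; exact: cvgr_dist_lt.
  have := ler_norm (q p - q (w n)); have := ler_norm (4 * gap n).
  by rewrite sub0r normrN /gap; lra.
have [fp Fp] := EFin_of_le (FN p) Fp_le.
by exists p, fp; split=> //; move: Fp_le; rewrite Fp lee_fin /q; lra.
Unshelve. all: by end_near.
Qed.

Lemma prox_exists {x0 : 'cV[R]_k} {f0 : R} : F x0 = f0%:E ->
  exists p fp, F p = fp%:E /\ prox_min F (fun=> 0) 1 x0 p.
Proof.
move=> /prox_objective_inf [g [gmin /(prox_objective_argmin gmin) [p [fp [Fp fp_le]]]]].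
exists p, fp; split=> // v; rewrite Fp !add0r !mulr1.
have := FN v; case Fv: (F v) => [fv||] // _; last by rewrite leey.
by rewrite -!EFinD lee_fin; have := gmin v fv Fv; lra.
Qed.

Lemma convex_lsc_affine_minorant {x0 : 'cV[R]_k} {f0 : R} : F x0 = f0%:E ->
  exists y0 c, forall w, ((dotv y0 w)%:E - F w <= c%:E)%E.
Proof.
move=> /prox_exists [p [fp [Fp pmin]]].
have L0 : affine_fun (fun _ : 'cV[R]_k => 0 : R) by move=> *; rewrite !mulr0 addr0.
have s1 : 0 <= 0 + 1^-1 :> R by rewrite add0r invr1 ler01.
exists (x0 - p), (dotv (x0 - p) p - fp) => w.
have := FN w; case Fw: (F w) => [fw||] // _; last by rewrite leNye.
have := prox_three_point (convex_efun_strongly_convex_e0 Fconv) FN L0 ltr01 s1 pmin Fp Fw.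
rewrite -EFinB lee_fin !sqr_normv !(dotvBl, dotvBr) (dotvC x0 w) (dotvC p w) (dotvC x0 p).
lra.
Qed.

End ProxExistence.

Lemma proper_conjugate {R : realType} {k : nat} {F : 'cV[R]_k -> \bar R} :
  proper_efun F -> convex_efun F -> lower_semicontinuous F -> proper_efun (conjugate F).
Proof.
move=> Fprop Fconv Flsc; have [x0 [f0 Fx0]] := proper_efun_fin Fprop.
split=> [y|].
  suff : ((dotv y x0 - f0)%:E <= conjugate F y)%E by case: (conjugate F y).
  by apply: le_ereal_sup_tmp; exists ((dotv y x0)%:E - F x0)%E; [exists x0 | rewrite Fx0].
have [y0 [c Hc]] := convex_lsc_affine_minorant Fconv Flsc Fprop.1 Fx0.
exists y0; suff : (conjugate F y0 <= c%:E)%E by case: (conjugate F y0).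
by apply: ge_ereal_sup => _ [w _ <-]; exact: Hc.
Qed.

Section PDHGM.
Context {R : realType} {m n : nat} {A : 'M[R]_(m, n)} {tau sigma : R}.

Lemma pdhgm_prox_min_x {Rf : 'cV[R]_n -> R} {Fs x y} :
  pdhgm Rf A Fs tau sigma x y -> forall i,
  prox_min (fun v => (Rf v)%:E) (fun v => dotv (y i) (A *m v)) tau (x i) (x i.+1).
Proof. by move=> hpd i v; rewrite -!EFinD lee_fin !addrA; exact: (hpd i).1. Qed.

Lemma pdhgm_prox_min_y {Rf Fs} {x : nat -> 'cV[R]_n} {y} :
  pdhgm Rf A Fs tau sigma x y -> forall i,
  prox_min Fs (fun v => - dotv v (A *m (x i.+1 + (x i.+1 - x i)))) sigma (y i) (y i.+1).
Proof. by move=> hpd i v; have := (hpd i).2 v; rewrite !EFinD !EFinN !addeA. Qed.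

Lemma lyap_descent_of_steps {rho mu : R} {x0 x1 x2 : 'cV[R]_n} {y0 y1 y2 : 'cV[R]_m}
    {r1 r2 f1 f2 : R} :
  r2 + dotv y1 (A *m x2) + (2 * tau)^-1 * normv (x2 - x1) ^+ 2
     + (- rho + tau^-1) / 2 * normv (x1 - x2) ^+ 2
    <= r1 + dotv y1 (A *m x1) ->
  f1 - dotv y1 (A *m (x1 + (x1 - x0))) + (2 * sigma)^-1 * normv (y1 - y0) ^+ 2
     + (mu + sigma^-1) / 2 * normv (y2 - y1) ^+ 2
    <= f2 - dotv y2 (A *m (x1 + (x1 - x0))) + (2 * sigma)^-1 * normv (y2 - y0) ^+ 2 ->
  0 <= normM2 A tau sigma (x0 - x1, (y0 - y1) - (y1 - y2)) ->
  0 < tau -> 0 < sigma ->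
  (mu * sigma - 3) / 2 * (normv (y1 - y2) ^+ 2 / sigma)
    + (1 - rho * tau) / 2 * (normv (x1 - x2) ^+ 2 / tau)
  <= r1 + dotv (A *m x1) y1 - f1 + normM2 A tau sigma (x0 - x1, y0 - y1) / 2
     - (r2 + dotv (A *m x2) y2 - f2 + normM2 A tau sigma (x1 - x2, y1 - y2) / 2).
Proof.
(* Given X and Y, the remaining gap is exactly
   |(x0 - x1, (y0 - y1) - (y1 - y2))|_M^2 / 2 + |y1 - y2|^2 / (2 sigma). *)
move=> X Y M t0 s0; rewrite /normM2 /= in M *.
have -> : (mu * sigma - 3) / 2 * (normv (y1 - y2) ^+ 2 / sigma)
    = (mu / 2 - 3 / 2 * sigma^-1) * normv (y1 - y2) ^+ 2.
  by field; rewrite gt_eqF.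
have -> : (1 - rho * tau) / 2 * (normv (x1 - x2) ^+ 2 / tau)
    = (tau^-1 / 2 - rho / 2) * normv (x1 - x2) ^+ 2.
  by field; rewrite gt_eqF.
have V : 0 <= sigma^-1 * normv (y1 - y2) ^+ 2 by rewrite mulr_ge0 ?invr_ge0 ?sqr_ge0 ?ltW.
rewrite ?invfM in X Y.
rewrite !sqr_normv in X Y M V *.
rewrite !(mulmxDr, mulmxBr, mulmxN, dotvDl, dotvDr, dotvBl, dotvBr, dotvNl, dotvNr)
  in X Y M V *.
rewrite ![dotv (y1) (A *m _)]dotvC ![dotv (y2) (A *m _)]dotvC in X Y.
have := dotvC x0 x1; have := dotvC x0 x2; have := dotvC x1 x2.
have := dotvC y0 y1; have := dotvC y0 y2; have := dotvC y1 y2.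
lra.
Qed.

End PDHGM.

Theorem mainTheorem5 (R : realType) (m n : nat) (A : 'M[R]_(m, n))
  (Rf : 'cV[R]_n -> R) (F : 'cV[R]_m -> \bar R) (rho mu tau sigma : R)
  (x : nat -> 'cV[R]_n) (y : nat -> 'cV[R]_m) :
  0 <= rho -> 0 < mu ->
  weakly_convex rho Rf ->
  proper_efun F -> convex_efun F -> lower_semicontinuous F ->
  strongly_convex_e mu (conjugate F) ->
  0 < tau -> 0 < sigma ->
  tau * sigma * opnorm A ^+ 2 < 1 -> tau * rho < 1 -> mu * sigma > 3 ->
  pdhgm Rf A (conjugate F) tau sigma x y ->
  forall k : nat, (1 <= k)%N ->
    (lyap Rf A (conjugate F) tau sigma (x k, y k) (x k.-1, y k.-1)
       - lyap Rf A (conjugate F) tau sigma (x k.+1, y k.+1) (x k, y k)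
     >= ((mu * sigma - 3) / 2 * (normv (y k - y k.+1) ^+ 2 / sigma)
         + (1 - rho * tau) / 2 * (normv (x k - x k.+1) ^+ 2 / tau))%:E)%E.
Proof.
(* 0 <= rho and mu sigma > 3 only make the bound nonnegative; the proof does not
   use them. *)
move=> _ mu0 Rconv Fprop Fconv Flsc Fsconv t0 s0 hts htr _ hpd [//|k] _ /=.
have Fsprop := proper_conjugate Fprop Fconv Flsc.
have [f1 Fy1] := prox_min_fin Fsprop (pdhgm_prox_min_y hpd k).
have [f2 Fy2] := prox_min_fin Fsprop (pdhgm_prox_min_y hpd k.+1).
have x_mod : 0 <= - rho + tau^-1.
  by rewrite addrC subr_ge0 -(ler_pM2l t0) mulfV ?gt_eqF // ltW.
have y_mod : 0 <= mu + sigma^-1 by rewrite addr_ge0 ?invr_ge0 ?ltW.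
have X := prox_descent (weakly_convex_strongly_convex_e Rconv) (fun=> isT)
  (affine_fun_dotv_mulmx _ _) t0 x_mod (pdhgm_prox_min_x hpd k.+1) erefl erefl.
have Y := prox_three_point Fsconv Fsprop.1 (affine_fun_opp_dotv _) s0 y_mod
  (pdhgm_prox_min_y hpd k) Fy1 Fy2.
have M := normM2_ge0 A (x k - x k.+1, (y k - y k.+1) - (y k.+1 - y k.+2)) t0 s0 (ltW hts).
rewrite /lyap /saddleL /= Fy1 Fy2 /= lee_fin.
exact: lyap_descent_of_steps X Y M t0 s0.
Qed.
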